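(* Let $n$ be an even positive integer such that $n'=n/2$ is odd, and let $q$ be an odd prime power coprime to $n$. Then every orbit of the permutation $\tau_{n'}$ on the set $\mathbb{Z}_n/\mu_q$ of $q$-cosets has length $2$; in particular, Type-I duadic splittings of $\mathbb{Z}_n$ given by $\tau_{n'}$ exist.
   Context: $\mathbb{Z}_n=\mathbb{Z}/n\mathbb{Z}$. $\mu_q:\mathbb{Z}_n\to\mathbb{Z}_n$, $i\mapsto qi\bmod n$; the $q$-cosets are the orbits of $\mu_q$ on $\mathbb{Z}_n$, and $\mathbb{Z}_n/\mu_q$ is the set of $q$-cosets. For $t\in\mathbb{Z}_n$ with $qt\equiv t\pmod n$, $\tau_t:\mathbb{Z}_n\to\mathbb{Z}_n$, $i\mapsto i+t\bmod n$ (a $q$-translation); it maps $q$-cosets to $q$-cosets. Type-I duadic splittings of $\mathbb{Z}_n$ given by $\tau_t$ exist if there is a $\mu_q$-invariant subset $P\subseteq\mathbb{Z}_n$ (i.e. $\mu_q(P)=P$) such that $\mathbb{Z}_n=P\cup\tau_t(P)$ is a disjoint union. *)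

From mathcomp Require Import all_boot.
Set Implicit Arguments. Unset Strict Implicit. Unset Printing Implicit Defensive.

(* Z_n is represented by 'I_n (residues 0..n-1); any i : 'I_n witnesses 0 < n. *)
Lemma ord_pos n (i : 'I_n) : 0 < n.
Proof. exact: leq_ltn_trans (leq0n i) (ltn_ord i). Qed.

Definition mu n (q : nat) (i : 'I_n) : 'I_n :=
  Ordinal (ltn_pmod (q * i) (ord_pos i)).

Definition tau n (t : nat) (i : 'I_n) : 'I_n :=
  Ordinal (ltn_pmod (i + t) (ord_pos i)).

Definition qcoset n q (i : 'I_n) : {set 'I_n} := [set j | fconnect (mu q) i j].

Definition qcosets n q : {set {set 'I_n}} := [set qcoset q i | i : 'I_n].

Definition tauS n t (C : {set 'I_n}) : {set 'I_n} := tau t @: C.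

Definition q_translation n q t := q * t = t %[mod n].

Definition typeI_duadic_splitting_exists n q t :=
  q_translation n q t /\
  exists P : {set 'I_n},
    [/\ mu q @: P = P, P :&: tau t @: P = set0 & P :|: tau t @: P = setT].

Definition prime_power (q : nat) := exists p k, [/\ prime p, 0 < k & q = p ^ k].

From mathcomp Require Import all_boot.

(* Write n = 2t with t odd.  Since n is even, residues mod n have a parity;
   multiplication by the odd q preserves it, so every q-coset consists of
   residues of one parity, while translation by the odd t flips it.  As
   t + t = n, tau_t is an involution, so it swaps each q-coset with a different
   one: all orbits have length 2.  The even residues form a mu_q-invariant set
   P with tau_t(P) its complement, which is a Type-I splitting.  Neither
   q being a prime power nor q being coprime to n matters for the orbit
   lengths; coprimality only makes mu_q a bijection. *)

Lemma order_involution (T : finType) (f : T -> T) x :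
  f (f x) = x -> f x != x -> order f x = 2.
Proof.
move=> ffx fx_neq_x.
have cyc : fcycle f [:: x; f x] by rewrite /= ffx !eqxx.
have uniq_x_fx : uniq [:: x; f x] by rewrite /= inE eq_sym fx_neq_x.
by rewrite (order_cycle cyc uniq_x_fx) // mem_head.
Qed.

Lemma eqn_modMl_coprime q m k n :
  coprime q n -> (q * m == q * k %[mod n]) = (m == k %[mod n]).
Proof.
move=> cop_qn; wlog le_km : m k / k <= m.
  move=> wlog_le; case: (leqP k m) => [|/ltnW] /wlog_le //.
  by rewrite eq_sym [k %% n == _]eq_sym.
rewrite !eqn_mod_dvd ?leq_mul2l ?le_km ?orbT // -mulnBr.
by rewrite Gauss_dvdr // coprime_sym.
Qed.

Section Residues.

Variables n q t : nat.
Implicit Types (i : 'I_n) (C : {set 'I_n}).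

Lemma mu_inj : coprime q n -> injective (@mu n q).
Proof.
move=> cop_qn i j /(congr1 val)/eqP /=.
by rewrite eqn_modMl_coprime // !modn_small // => /eqP/val_inj.
Qed.

Hypothesis double_t : t + t = n.

Lemma tau_involutive : involutive (@tau n t).
Proof.
move=> i; apply: val_inj.
by rewrite /= modnDml -addnA double_t modnDr modn_small.
Qed.

Lemma tauS_involutive : involutive (@tauS n t).
Proof.
move=> C; rewrite /tauS -imset_comp.
by rewrite (eq_imset _ tau_involutive) imset_id.
Qed.

Lemma q_translation_odd : odd q -> q_translation n q t.
Proof.
move=> odd_q; rewrite /q_translation -[q]odd_double_half odd_q.
by rewrite mulnDl mul1n -muln2 -mulnA mul2n -addnn double_t addnC modnMDl.
Qed.

Hypothesis n_even : ~~ odd n.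

Lemma odd_tau i : odd (tau t i) = odd i (+) odd t.
Proof. by rewrite /= odd_mod ?(negbTE n_even) // oddD. Qed.

Lemma odd_mu i : odd (mu q i) = odd q && odd i.
Proof. by rewrite /= odd_mod ?(negbTE n_even) // oddM. Qed.

Hypotheses (odd_q : odd q) (odd_t : odd t).

Lemma odd_qcoset i j : j \in qcoset q i -> odd j = odd i.
Proof.
rewrite inE => mu_ij; symmetry.
apply: (fconnect_invariant (k := fun k : 'I_n => odd k) _ mu_ij) => k.
by apply/eqP; rewrite odd_mu odd_q.
Qed.

Lemma order_tauS_qcoset i : order (tauS t) (qcoset q i) = 2.
Proof.
apply: order_involution; first exact: tauS_involutive.
apply/negP => /eqP fixed.
have : tau t i \in tauS t (qcoset q i) by apply: imset_f; rewrite inE connect0.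
rewrite fixed => /odd_qcoset.
by rewrite odd_tau odd_t addbT; case: (odd i).
Qed.

Definition evens : {set 'I_n} := [set i : 'I_n | ~~ odd i].

Lemma mu_evens : coprime q n -> mu q @: evens = evens.
Proof.
move=> cop_qn; apply/eqP.
rewrite eqEcard card_imset ?leqnn ?andbT; last exact: mu_inj.
apply/subsetP => _ /imsetP[i even_i ->].
by move: even_i; rewrite !inE odd_mu odd_q.
Qed.

Lemma tau_evens : tau t @: evens = ~: evens.
Proof.
apply/setP => j; rewrite !inE negbK.
apply/imsetP/idP => [[i] | odd_j].
  by rewrite inE => even_i ->; rewrite odd_tau odd_t addbT.
exists (tau t j); last by rewrite tau_involutive.
by rewrite inE odd_tau odd_t odd_j.
Qed.

Lemma typeI_duadic_splitting_evens :
  coprime q n -> typeI_duadic_splitting_exists n q t.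
Proof.
move=> cop_qn; split; first exact: q_translation_odd.
exists evens; rewrite tau_evens mu_evens //.
by rewrite setICr setUCr.
Qed.

End Residues.

Theorem theorem4p5 (n q : nat) :
  0 < n -> ~~ odd n -> odd n./2 ->
  prime_power q -> odd q -> coprime q n ->
  (forall C, C \in qcosets n q -> order (tauS n./2) C = 2) /\
  typeI_duadic_splitting_exists n q n./2.
Proof.
move=> _ n_even odd_half _ odd_q cop_qn.
have double_half : n./2 + n./2 = n by rewrite addnn even_halfK.
split; last exact: typeI_duadic_splitting_evens.
by move=> _ /imsetP[i _ ->]; apply: order_tauS_qcoset.
Qed.
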